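(* Let $n\ge2$, let $\mathcal{S}=\{\boldsymbol{\sigma}(\mathbf{t}):\mathbf{t}\in D\}$ be a rationally parameterisable hypersurface in $\mathbb{R}^n$ and let $O\subseteq D\setminus\sigma_1^{-1}(0)$ be open in $\mathbb{R}^{n-1}$. Suppose there is $\mathbf{t}\in O$ such that \[\det\left(\frac{\partial\overline{\boldsymbol{\sigma}}(\mathbf{t})}{\partial\mathbf{t}}\right)\neq0,\] where $\overline{\boldsymbol{\sigma}}=(\sigma_1,\dots,\sigma_{n-1})^T$, and such that for the point $\mathbf{s}=\boldsymbol{\sigma}(\mathbf{t})\in\mathcal{S}$ there is no neighborhood $U$ of $1$ in $\mathbb{R}$ with $\lambda\mathbf{s}\in\mathcal{S}$ for all $\lambda\in U$. Then $O$ satisfies the inner point condition.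
   Context: An rp-hypersurface is $\mathcal{S}=\{\boldsymbol{\sigma}(\mathbf{t}):\mathbf{t}\in D\}$ with $\boldsymbol{\sigma}=(\sigma_1,\dots,\sigma_n)^T$ having rational functions of $\mathbf{t}=(t_1,\dots,t_{n-1})$ as components and $D\subseteq\mathbb{R}^{n-1}$ a set where they are defined. $\frac{\partial\overline{\boldsymbol{\sigma}}(\mathbf{t})}{\partial\mathbf{t}}$ denotes the $(n-1)\times(n-1)$ Jacobian matrix of $\overline{\boldsymbol{\sigma}}$. $\hat{\boldsymbol{\sigma}}(\mathbf{t})=(\sigma_2(\mathbf{t})/\sigma_1(\mathbf{t}),\dots,\sigma_n(\mathbf{t})/\sigma_1(\mathbf{t}))^T$ for $\mathbf{t}\in D\setminus\sigma_1^{-1}(0)$. The inner point condition for $O$ means: there is $\mathbf{t}'\in O$ such that $\hat{\boldsymbol{\sigma}}(\mathbf{t}')$ is an interior point of $\hat{\boldsymbol{\sigma}}(O)=\{\hat{\boldsymbol{\sigma}}(\mathbf{u}):\mathbf{u}\in O\}$ in $\mathbb{R}^{n-1}$. *)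

From HB Require Import structures.
From mathcomp Require Import all_boot all_order all_algebra.
From mathcomp Require Import all_classical all_reals all_analysis.
From mathcomp Require mpoly.
Set Implicit Arguments. Unset Strict Implicit. Unset Printing Implicit Defensive.
Import Order.TTheory GRing.Theory Num.Theory.
Import numFieldNormedType.Exports.
Local Open Scope classical_set_scope.
Local Open Scope ring_scope.

(* Throughout, n = m.+1 (so n >= 2 iff 1 <= m); parameters t live in
   R^(n-1) = 'rV[R]_m, points of the hypersurface in R^n = 'rV[R]_m.+1.
   Components are indexed from 0: sigma_1 is component ord0. *)

Definition rat_eval (R : realType) (m : nat)
  (P Q : mpoly.mpoly m R) (t : 'rV[R]_m) : R :=
  mpoly.meval (fun j => t ord0 j) P / mpoly.meval (fun j => t ord0 j) Q.

Definition sigma (R : realType) (m : nat)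
  (P Q : 'I_m.+1 -> mpoly.mpoly m R) (t : 'rV[R]_m) : 'rV[R]_m.+1 :=
  \row_i rat_eval (P i) (Q i) t.

Definition defined_on (R : realType) (m : nat)
  (Q : 'I_m.+1 -> mpoly.mpoly m R) (D : set 'rV[R]_m) : Prop :=
  forall t, D t -> forall i, mpoly.meval (fun j => t ord0 j) (Q i) != 0.

Definition rp_hypersurface (R : realType) (m : nat)
  (P Q : 'I_m.+1 -> mpoly.mpoly m R) (D : set 'rV[R]_m) : set 'rV[R]_m.+1 :=
  sigma P Q @` D.

Definition sigma_bar (R : realType) (m : nat)
  (P Q : 'I_m.+1 -> mpoly.mpoly m R) (t : 'rV[R]_m) : 'rV[R]_m :=
  \row_(i < m) sigma P Q t ord0 (widen_ord (leqnSn m) i).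

(* The Jacobian matrix is the library's derive.jacobian
   (= lin1_mx ('d f t), the transpose of the usual convention; same determinant). *)

Definition sigma_hat (R : realType) (m : nat)
  (P Q : 'I_m.+1 -> mpoly.mpoly m R) (t : 'rV[R]_m) : 'rV[R]_m :=
  \row_(i < m) (sigma P Q t ord0 (lift ord0 i) / sigma P Q t ord0 ord0).

Definition inner_point_condition (R : realType) (m : nat)
  (P Q : 'I_m.+1 -> mpoly.mpoly m R) (O : set 'rV[R]_m) : Prop :=
  exists t', O t' /\ interior (sigma_hat P Q @` O) (sigma_hat P Q t').

From HB Require Import structures.
From mathcomp Require Import all_boot all_order all_algebra.
From mathcomp Require Import all_classical all_reals all_analysis.
From mathcomp Require mpoly.
From mathcomp Require Import ring lra.
Import Order.TTheory GRing.Theory Num.Theory.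
Import numFieldNormedType.Exports.
Local Open Scope classical_set_scope.
Local Open Scope ring_scope.

Set Implicit Arguments. Unset Strict Implicit. Unset Printing Implicit Defensive.

(* If the inner point condition failed, sigma_hat would have a singular Jacobian
   at every point of O, since a strictly differentiable map with invertible
   derivative is locally onto.  A vector v killing the gradients of all the
   quotients sigma_i / sigma_1 at u satisfies, by the quotient rule,
   v . grad sigma_i(u) = beta sigma_i(u) for all i: the derivative of sigma_bar
   maps v to the radial direction.  As sigma_bar is a local diffeomorphism at t,
   the points u(lam) with sigma_bar(u(lam)) = lam sigma_bar(t) form a curve
   through t moving along such kernel vectors, so sigma_n / sigma_1 has zero
   slope, hence is constant, along it.  Thus sigma(u(lam)) = lam s for every
   lam near 1, which is excluded. *)

Section MatrixNorm.
Variable R : realType.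

Lemma nbhs_distP (V : pseudoMetricNormedZmodType R) (x : V) (A : set V) :
  nbhs x A <-> exists2 d, 0 < d & forall y, `|y - x| < d -> A y.
Proof.
split=> [/nbhs_ballP [d d0 dA]|[d d0 dA]].
  by exists d => // y xy; apply: dA; rewrite -ball_normE /= distrC.
by apply/nbhs_ballP; exists d => // y; rewrite -ball_normE /= distrC => /dA.
Qed.

Lemma mx_norm_entry_le m n (A : 'M[R]_(m, n)) i j : `|A i j| <= `|A|.
Proof.
change (`|A i j| <= mx_norm A); rewrite mx_normrE.
exact: (le_bigmax _ (fun ij : 'I_m * 'I_n => `|A ij.1 ij.2|) (i, j)).
Qed.

Lemma mx_norm_le m n (A : 'M[R]_(m, n)) c :
  0 <= c -> (forall i j, `|A i j| <= c) -> `|A| <= c.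
Proof.
move=> c0 Ac; change (mx_norm A <= c); rewrite mx_normrE.
by apply: bigmax_le => // -[i j] _; exact: Ac.
Qed.

Lemma norm_sum_mul_le m (a b : 'I_m -> R) A B :
  (forall j, `|a j| <= A) -> (forall j, `|b j| <= B) ->
  `|\sum_j a j * b j| <= m%:R * A * B.
Proof.
move=> aA bB; apply: (le_trans (ler_norm_sum _ _ _)).
have -> : m%:R * A * B = \sum_(j < m) A * B.
  by rewrite sumr_const card_ord mulr_natl mulrnAl.
by apply: ler_sum => j _; rewrite normrM; apply: ler_pM.
Qed.

Lemma mulmx_norm_le m n (v : 'rV[R]_m) (M : 'M[R]_(m, n)) :
  `|v *m M| <= m%:R * `|M| * `|v|.
Proof.
apply: mx_norm_le => [|a i]; first by rewrite !mulr_ge0.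
rewrite (ord1 a) mxE; under eq_bigr do rewrite mulrC.
by apply: norm_sum_mul_le => j; exact: mx_norm_entry_le.
Qed.

Lemma unitmx_norm_lb m (M : 'M[R]_m) : M \in unitmx ->
  exists2 k, 0 < k & forall v : 'rV[R]_m, k * `|v| <= `|v *m M|.
Proof.
move=> uM; set C := m%:R * `|invmx M| + 1.
have C0 : 0 < C by rewrite ltr_wpDl // mulr_ge0.
exists C^-1; first by rewrite invr_gt0.
move=> v; rewrite mulrC ler_pdivrMr // mulrC.
rewrite -{1}[v](mulmxK uM); apply: (le_trans (mulmx_norm_le _ _)).
by rewrite ler_wpM2r // lerDl.
Qed.

Lemma mulmx_continuous m n (M : 'M[R]_(m, n)) :
  continuous (fun v : 'rV[R]_m => v *m M).
Proof.
move=> v; apply/(@cvgrPdist_le R _ _ (nbhs v) (nbhs_filter v)) => e e0.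
have K0 : 0 < m%:R * `|M| + 1 by rewrite ltr_wpDl // mulr_ge0.
apply/nbhs_distP; exists (e / (m%:R * `|M| + 1)); first by rewrite divr_gt0.
move=> w vw; rewrite -mulmxBl; apply: (le_trans (mulmx_norm_le _ _)); rewrite distrC.
apply: (@le_trans _ _ ((m%:R * `|M| + 1) * `|w - v|)).
  by rewrite ler_wpM2r // lerDl.
by rewrite mulrC -ler_pdivlMr // ltW.
Qed.

Definition rdot m (u v : 'rV[R]_m) : R := \sum_j u 0 j * v 0 j.

Lemma rdot_le m (u v : 'rV[R]_m) : `|rdot u v| <= m%:R * `|v| * `|u|.
Proof.
rewrite /rdot; under eq_bigr do rewrite mulrC.
by apply: norm_sum_mul_le => j; exact: mx_norm_entry_le.
Qed.

Lemma rdotBl m (u w v : 'rV[R]_m) : rdot (u - w) v = rdot u v - rdot w v.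
Proof. by rewrite /rdot -sumrB; apply: eq_bigr => j _; rewrite !mxE mulrBl. Qed.

Lemma rdotZl m a (u v : 'rV[R]_m) : rdot (a *: u) v = a * rdot u v.
Proof. by rewrite /rdot mulr_sumr; apply: eq_bigr => j _; rewrite !mxE mulrA. Qed.

Lemma rdotDr m (u v w : 'rV[R]_m) : rdot u (v + w) = rdot u v + rdot u w.
Proof. by rewrite /rdot -big_split; apply: eq_bigr => j _; rewrite !mxE mulrDr. Qed.

Lemma rdotZr m a (u v : 'rV[R]_m) : rdot u (a *: v) = a * rdot u v.
Proof. by rewrite /rdot mulr_sumr; apply: eq_bigr => j _; rewrite !mxE mulrCA. Qed.

Lemma rdotBr m (u v w : 'rV[R]_m) : rdot u (v - w) = rdot u v - rdot u w.
Proof. by rewrite rdotDr -scaleN1r rdotZr mulN1r. Qed.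

Lemma rdot0r m (u : 'rV[R]_m) : rdot u 0 = 0.
Proof. by rewrite /rdot big1 // => j _; rewrite mxE mulr0. Qed.

Lemma rdot_delta m (u : 'rV[R]_m) j : rdot u (delta_mx 0 j) = u 0 j.
Proof.
rewrite /rdot (bigD1 j) //= mxE !eqxx mulr1 big1 ?addr0 // => k /negbTE kj.
by rewrite mxE kj andbF mulr0.
Qed.

End MatrixNorm.

Section StrictGradient.
Variable R : realType.

(* Strict differentiability: the linear approximation controls f y - f z for
   all pairs y, z near x, not only for z = x; this is what makes the local
   inversion and the injectivity estimates below work. *)
Definition strict_grad m (f : 'rV[R]_m -> R) (x g : 'rV[R]_m) := forall e, 0 < e ->
  exists2 d, 0 < d & forall y z, `|y - x| < d -> `|z - x| < d ->
    `|f y - f z - rdot (y - z) g| <= e * `|y - z|.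

Definition strict_deriv (phi : R -> R) (c a : R) := forall e, 0 < e ->
  exists2 d, 0 < d & forall p q, `|p - c| < d -> `|q - c| < d ->
    `|phi p - phi q - a * (p - q)| <= e * `|p - q|.

Lemma strict_grad_ext m (f f' : 'rV[R]_m -> R) x g :
  f =1 f' -> strict_grad f x g -> strict_grad f' x g.
Proof.
move=> ff' fg e e0; have [d d0 fd] := fg e e0.
by exists d => // y z xy xz; rewrite -!ff'; exact: fd.
Qed.

Lemma strict_grad_cst m c (x : 'rV[R]_m) : strict_grad (fun=> c) x 0.
Proof.
move=> e e0; exists 1 => // y z _ _.
by rewrite rdot0r !subrr normr0 mulr_ge0 // ltW.
Qed.

Lemma strict_grad_coord m j (x : 'rV[R]_m) :
  strict_grad (fun y => y 0 j) x (delta_mx 0 j).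
Proof.
move=> e e0; exists 1 => // y z _ _.
by rewrite rdot_delta !mxE subrr normr0 mulr_ge0 // ltW.
Qed.

Lemma strict_grad_lipschitz m (f : 'rV[R]_m -> R) x g : strict_grad f x g ->
  exists2 d, 0 < d & forall y z, `|y - x| < d -> `|z - x| < d ->
    `|f y - f z| <= (m%:R * `|g| + 1) * `|y - z|.
Proof.
move=> fg; have [d d0 fd] := fg 1 ltr01; exists d => // y z xy xz.
have := fd y z xy xz; rewrite mul1r => fyz.
have := ler_normD (f y - f z - rdot (y - z) g) (rdot (y - z) g).
rewrite subrK => /le_trans; apply.
by rewrite mulrDl mul1r addrC lerD // rdot_le.
Qed.

Lemma strict_grad_continuous m (f : 'rV[R]_m -> R) x g : strict_grad f x g ->
  forall e, 0 < e -> exists2 d, 0 < d & forall y, `|y - x| < d -> `|f y - f x| <= e.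
Proof.
move=> fg e e0; have [d d0 fd] := strict_grad_lipschitz fg.
have L0 : 0 < m%:R * `|g| + 1 by rewrite ltr_wpDl // mulr_ge0.
exists (Num.min d (e / (m%:R * `|g| + 1))); first by rewrite lt_min d0 divr_gt0.
move=> y; rewrite lt_min => /andP [xy ye].
apply: (le_trans (fd y x xy _)); first by rewrite subrr normr0.
by rewrite -ler_pdivlMl // mulrC ltW.
Qed.

Lemma strict_grad_add m (f h : 'rV[R]_m -> R) x g g' :
  strict_grad f x g -> strict_grad h x g' ->
  strict_grad (fun y => f y + h y) x (g + g').
Proof.
move=> fg hg' e e0; have e20 : 0 < e / 2 by rewrite divr_gt0.
have [d1 d10 fd] := fg _ e20; have [d2 d20 hd] := hg' _ e20.
exists (Num.min d1 d2); first by rewrite lt_min d10 d20.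
move=> y z; rewrite !lt_min => /andP [y1 y2] /andP [z1 z2].
have -> : f y + h y - (f z + h z) - rdot (y - z) (g + g') =
  (f y - f z - rdot (y - z) g) + (h y - h z - rdot (y - z) g').
  by rewrite rdotDr; ring.
apply: (le_trans (ler_normD _ _)); rewrite [e]splitr mulrDl.
exact: lerD (fd _ _ y1 z1) (hd _ _ y2 z2).
Qed.

Lemma strict_grad_mul m (f h : 'rV[R]_m -> R) x g g' :
  strict_grad f x g -> strict_grad h x g' ->
  strict_grad (fun y => f y * h y) x (h x *: g + f x *: g').
Proof.
move=> fg hg' e e0.
set A := `|h x| + 1; set B := `|f x| + 1.
set K := m%:R * `|g|; set K' := m%:R * `|g'|.
have [K0 K'0] : 0 <= K /\ 0 <= K' by split; rewrite mulr_ge0.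
have S0 : 0 < A + B + K + K'.
  by have := normr_ge0 (h x); have := normr_ge0 (f x); rewrite /A /B; lra.
set e' := e / (A + B + K + K').
have e'0 : 0 < e' by rewrite divr_gt0.
have e'S : e' * (A + B + K + K') = e by rewrite divfK // gt_eqF.
have c0 : 0 < Num.min 1 e' by rewrite lt_min ltr01 e'0.
have [d1 d10 fd] := fg _ e'0; have [d2 d20 hd] := hg' _ e'0.
have [d3 d30 hc] := strict_grad_continuous hg' c0.
have [d4 d40 fc] := strict_grad_continuous fg c0.
exists (Num.min (Num.min d1 d2) (Num.min d3 d4)).
  by rewrite !lt_min d10 d20 d30 d40.
move=> y z; rewrite !lt_min => /andP [/andP [y1 y2] /andP [y3 _]].
move=> /andP [/andP [z1 z2] /andP [_ z4]].
set v := y - z; set a := f y - f z - rdot v g; set b := h y - h z - rdot v g'.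
have -> : f y * h y - f z * h z - rdot v (h x *: g + f x *: g') =
    a * h y + rdot v g * (h y - h x) + f z * b + rdot v g' * (f z - f x).
  by rewrite rdotDr !rdotZr /a /b; ring.
have := hc _ y3; rewrite le_min => /andP [hy1 hye].
have := fc _ z4; rewrite le_min => /andP [fz1 fze].
have hyA : `|h y| <= A by have := lerB_dist (h y) (h x); rewrite /A; lra.
have fzB : `|f z| <= B by have := lerB_dist (f z) (f x); rewrite /B; lra.
have t1 : `|a * h y| <= e' * `|v| * A.
  by rewrite normrM; apply: ler_pM => //; exact: fd.
have t2 : `|rdot v g * (h y - h x)| <= K * `|v| * e'.
  by rewrite normrM; apply: ler_pM => //; exact: rdot_le.
have t3 : `|f z * b| <= B * (e' * `|v|) by rewrite normrM; apply: ler_pM => //; exact: hd.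
have t4 : `|rdot v g' * (f z - f x)| <= K' * `|v| * e'.
  by rewrite normrM; apply: ler_pM => //; exact: rdot_le.
have : `|a * h y| + `|rdot v g * (h y - h x)| + `|f z * b|
    + `|rdot v g' * (f z - f x)| <= e * `|v|.
  by rewrite -e'S; lra.
apply: le_trans; do 2 (apply: (le_trans (ler_normD _ _)); rewrite lerD2r).
exact: ler_normD.
Qed.

Lemma strict_grad_comp m (f : 'rV[R]_m -> R) x g phi a :
  strict_grad f x g -> strict_deriv phi (f x) a ->
  strict_grad (fun y => phi (f y)) x (a *: g).
Proof.
move=> fg phia e e0.
set L := m%:R * `|g| + 1.
have L0 : 0 < L by rewrite ltr_wpDl // mulr_ge0.
have A0 : 0 < `|a| + 1 by rewrite ltr_wpDl.
set e1 := e / (2 * L); set e2 := e / (2 * (`|a| + 1)).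
have e10 : 0 < e1 by rewrite divr_gt0 // mulr_gt0.
have e20 : 0 < e2 by rewrite divr_gt0 // mulr_gt0.
have [dp dp0 phid] := phia _ e10.
have [dc dc0 fc] := strict_grad_continuous fg (divr_gt0 dp0 (ltr0Sn _ 1)).
have [dl dl0 fl] := strict_grad_lipschitz fg.
have [d2 d20 fd] := fg _ e20.
exists (Num.min dc (Num.min dl d2)); first by rewrite !lt_min dc0 dl0 d20.
move=> y z; rewrite !lt_min => /andP [y1 /andP [y2 y3]] /andP [z1 /andP [z2 z3]].
have fy : `|f y - f x| < dp by have := fc _ y1; lra.
have fz : `|f z - f x| < dp by have := fc _ z1; lra.
have -> : phi (f y) - phi (f z) - rdot (y - z) (a *: g) =
    (phi (f y) - phi (f z) - a * (f y - f z)) + a * (f y - f z - rdot (y - z) g).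
  by rewrite rdotZr; ring.
apply: (le_trans (ler_normD _ _)); rewrite normrM [e]splitr mulrDl.
apply: lerD.
  apply: le_trans (phid _ _ fy fz) _.
  have -> : e / 2 * `|y - z| = e1 * (L * `|y - z|) by rewrite /e1; field; rewrite gt_eqF.
  by apply: ler_wpM2l; [exact: ltW | exact: fl].
apply: le_trans (ler_wpM2l (normr_ge0 a) (fd _ _ y3 z3)) _.
have e2A : e2 * (`|a| + 1) = e / 2 by rewrite /e2; field; rewrite gt_eqF.
by rewrite mulrA ler_wpM2r //; lra.
Qed.

Lemma strict_deriv_inv c : c != 0 -> strict_deriv GRing.inv c (- (c ^+ 2)^-1).
Proof.
move=> c0 e e0; set k := `|c|.
have k0 : 0 < k by rewrite normr_gt0.
exists (Num.min (k / 2) (e * k ^+ 3 / 10)).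
  by rewrite lt_min !divr_gt0 // ?mulr_gt0 // exprn_gt0.
move=> p q; rewrite !lt_min => /andP [p1 p2] /andP [q1 q2].
have hp : k / 2 <= `|p| by have := lerB_dist c p; rewrite distrC -/k; lra.
have hq : k / 2 <= `|q| by have := lerB_dist c q; rewrite distrC -/k; lra.
have hq' : `|q| <= k + k / 2 by have := lerB_dist q c; rewrite -/k; lra.
have p0 : p != 0 by rewrite -normr_gt0; lra.
have q0 : q != 0 by rewrite -normr_gt0; lra.
have -> : p^-1 - q^-1 - - (c ^+ 2)^-1 * (p - q) =
    (p - q) * ((p * q - c ^+ 2) / (c ^+ 2 * (p * q))).
  by field; rewrite c0 p0 q0.
rewrite normrM mulrC ler_wpM2r // normrM normfV normrM normrX -/k [`|p * q|]normrM.
rewrite ler_pdivrMr; last by rewrite !mulr_gt0 ?exprn_gt0 // normr_gt0.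
have hpq : `|p * q - c ^+ 2| <= `|p - c| * `|q| + k * `|q - c|.
  have -> : p * q - c ^+ 2 = (p - c) * q + c * (q - c) by ring.
  by apply: (le_trans (ler_normD _ _)); rewrite !normrM.
have hA : `|p - c| * `|q| <= e * k ^+ 3 / 10 * (k + k / 2).
  by apply: ler_pM => //; exact: ltW.
have hB : k * `|q - c| <= k * (e * k ^+ 3 / 10) by rewrite ler_wpM2l // ltW.
have hC : k ^+ 2 / 4 <= `|p| * `|q|.
  have -> : k ^+ 2 / 4 = k / 2 * (k / 2) by rewrite expr2; field.
  by apply: ler_pM => //; rewrite divr_ge0 // ltW.
have ek : 0 < e * k ^+ 2 by rewrite mulr_gt0 // exprn_gt0.
have : e * k ^+ 3 / 10 * (k + k / 2) + k * (e * k ^+ 3 / 10) = e * k ^+ 2 * (k ^+ 2 / 4).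
  by rewrite !exprS expr0; field.
nra.
Qed.

Lemma strict_grad_inv m (f : 'rV[R]_m -> R) x g : strict_grad f x g -> f x != 0 ->
  strict_grad (fun y => (f y)^-1) x (- (f x ^+ 2)^-1 *: g).
Proof. by move=> fg fx0; exact: strict_grad_comp fg (strict_deriv_inv fx0). Qed.

Lemma strict_grad_div m (f h : 'rV[R]_m -> R) x g g' :
  strict_grad f x g -> strict_grad h x g' -> h x != 0 ->
  strict_grad (fun y => f y / h y) x ((h x)^-1 *: g - (f x / h x ^+ 2) *: g').
Proof.
move=> fg hg' hx0; have := strict_grad_mul fg (strict_grad_inv hg' hx0).
by rewrite scalerA mulrN scaleNr mulrC.
Qed.

Lemma quotient_grad_kernel m k (s : 'I_k.+1 -> R) (g : 'I_k.+1 -> 'rV[R]_m) v :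
  s ord0 != 0 ->
  (forall i, rdot v ((s ord0)^-1 *: g (lift ord0 i)
                     - (s (lift ord0 i) / s ord0 ^+ 2) *: g ord0) = 0) ->
  forall j, rdot v (g j) = rdot v (g ord0) / s ord0 * s j.
Proof.
move=> s0 vg j; case: (unliftP ord0 j) => [i ->|->]; last by rewrite divfK.
have /eqP := vg i; rewrite rdotBr !rdotZr subr_eq0 => /eqP.
move: (rdot v (g (lift ord0 i))) (rdot v (g ord0)) => a c h.
by rewrite -[a](mulVKf s0) h; field.
Qed.

Definition strict_diff m (f : 'rV[R]_m -> R) x := exists g, strict_grad f x g.

Lemma strict_diff_ext m (f f' : 'rV[R]_m -> R) x :
  f =1 f' -> strict_diff f x -> strict_diff f' x.
Proof. by move=> ff' [g fg]; exists g; exact: strict_grad_ext fg. Qed.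

Lemma strict_diff_add m (f h : 'rV[R]_m -> R) x :
  strict_diff f x -> strict_diff h x -> strict_diff (fun y => f y + h y) x.
Proof. by move=> [g fg] [g' hg']; exists (g + g'); exact: strict_grad_add. Qed.

Lemma strict_diff_mul m (f h : 'rV[R]_m -> R) x :
  strict_diff f x -> strict_diff h x -> strict_diff (fun y => f y * h y) x.
Proof.
by move=> [g fg] [g' hg']; exists (h x *: g + f x *: g'); exact: strict_grad_mul.
Qed.

Lemma strict_diff_prod m (I : Type) (r : seq I) (F : I -> 'rV[R]_m -> R) x :
  (forall i, strict_diff (F i) x) -> strict_diff (fun y => \prod_(i <- r) F i y) x.
Proof.
move=> Fd; elim: r => [|i r IH].
  apply: (strict_diff_ext (f := fun=> 1)) => [y|]; first by rewrite big_nil.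
  by exists 0; exact: strict_grad_cst.
apply: (strict_diff_ext (f := fun y => F i y * \prod_(j <- r) F j y)) => [y|].
  by rewrite big_cons.
exact: strict_diff_mul.
Qed.

Lemma strict_diff_meval m (p : mpoly.mpoly m R) x :
  strict_diff (fun y : 'rV[R]_m => mpoly.meval (fun j => y 0 j) p) x.
Proof.
have cst c : strict_diff (fun=> c) x by exists 0; exact: strict_grad_cst.
elim/mpoly.mpolyind: p => [|c mu p _ _ IH].
  by apply: (strict_diff_ext (f := fun=> 0)) => // y; rewrite mpoly.meval0.
apply: (strict_diff_ext (f := fun y => c * \prod_i y 0 i ^+ mpoly.fun_of_multinom mu i
   + mpoly.meval (fun j => y 0 j) p)) => [y|].
  by rewrite mpoly.mevalD mpoly.mevalZ mpoly.mevalX.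
apply: strict_diff_add => //; apply: strict_diff_mul => //.
apply: strict_diff_prod => i.
apply: (strict_diff_ext (f := fun y => \prod_(k < mpoly.fun_of_multinom mu i) y 0 i)).
  by move=> y; rewrite prodr_const card_ord.
by apply: strict_diff_prod => _; exists (delta_mx 0 i); exact: strict_grad_coord.
Qed.

End StrictGradient.

Section StrictJacobian.
Variable R : realType.

Definition strict_jac m n (F : 'rV[R]_m -> 'rV[R]_n) x (M : 'M[R]_(m, n)) :=
  forall e, 0 < e -> exists2 d, 0 < d & forall y z, `|y - x| < d -> `|z - x| < d ->
    `|F y - F z - (y - z) *m M| <= e * `|y - z|.

(* Column i is the gradient of the i-th component, the layout of [jacobian]. *)
Definition grad_mx m n (g : 'I_n -> 'rV[R]_m) : 'M[R]_(m, n) := \matrix_(j, i) g i 0 j.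

Lemma mulmx_grad_mx m n (v : 'rV[R]_m) (g : 'I_n -> 'rV[R]_m) i :
  (v *m grad_mx g) 0 i = rdot v (g i).
Proof. by rewrite !mxE; apply: eq_bigr => j _; rewrite mxE. Qed.

Lemma strict_jac_grad_mx m n (F : 'rV[R]_m -> 'rV[R]_n) x g :
  (forall i, strict_grad (fun y => F y 0 i) x (g i)) -> strict_jac F x (grad_mx g).
Proof.
move=> Fg e e0.
have /choice [d Fd] : forall i, exists d, 0 < d /\ forall y z,
    `|y - x| < d -> `|z - x| < d ->
    `|F y 0 i - F z 0 i - rdot (y - z) (g i)| <= e * `|y - z|.
  by move=> i; have [d d0 Fd] := Fg i e e0; exists d.
exists (\big[Num.min/1]_i d i); first by apply: lt_bigmin => // i _; exact: (Fd i).1.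
move=> y z xy xz; apply: mx_norm_le => [|a i]; first by rewrite mulr_ge0 // ltW.
have -> : (F y - F z - (y - z) *m grad_mx g) a i =
    F y 0 i - F z 0 i - rdot (y - z) (g i).
  by rewrite (ord1 a) -mulmx_grad_mx !mxE.
apply: (Fd i).2.
  by apply: (lt_le_trans xy); exact: bigmin_le.
by apply: (lt_le_trans xz); exact: bigmin_le.
Qed.

Lemma strict_jac_jacobian m n (F : 'rV[R]_m -> 'rV[R]_n) x M :
  strict_jac F x M -> jacobian F x = M.
Proof.
move=> FM.
have dF : 'd F x = mulmxr M :> (_ -> _).
  apply: diff_unique; first exact: mulmx_continuous.
  apply/eqaddoP => e e0; have [d d0 Fd] := FM e e0.
  apply/nbhs_distP; exists d => // h; rewrite subr0 => hd.
  have := Fd (h + x) x; rewrite addrK subrr normr0 => /(_ hd d0).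
  by rewrite /= !fctE opprD addrA.
by rewrite /jacobian dF; apply/matrixP => i j; rewrite mxE /= -rowE mxE.
Qed.

Lemma strict_jac_lower_bound m n (F : 'rV[R]_m -> 'rV[R]_n) p M k :
  strict_jac F p M -> 0 < k -> (forall v : 'rV_m, k * `|v| <= `|v *m M|) ->
  exists2 d, 0 < d & forall y z, `|y - p| < d -> `|z - p| < d ->
    k / 2 * `|y - z| <= `|F y - F z|.
Proof.
move=> FM k0 Mk; have [d d0 Fd] := FM (k / 2) (divr_gt0 k0 (ltr0Sn _ 1)).
exists d => // y z py pz.
have := Fd y z py pz; have := Mk (y - z).
have := ler_normB (F y - F z) (F y - F z - (y - z) *m M).
rewrite opprB addrC subrK; lra.
Qed.

Lemma strict_jac_near m n (F : 'rV[R]_m -> 'rV[R]_n) p M :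
  strict_jac F p M -> forall e, 0 < e -> exists2 d, 0 < d & forall u N,
    `|u - p| < d -> strict_jac F u N -> forall w : 'rV_m, `|w *m N - w *m M| <= e * `|w|.
Proof.
move=> FM e e0; have e20 : 0 < e / 2 by rewrite divr_gt0.
have [d d0 Fd] := FM _ e20; exists d => // u N pu FN w.
have [d1 d10 Fd1] := FN _ e20.
set rho := Num.min d1 (d - `|u - p|).
have rho0 : 0 < rho by rewrite lt_min d10 subr_gt0.
have w1 : 0 < `|w| + 1 by rewrite ltr_wpDl.
set tau := rho / (2 * (`|w| + 1)).
have tau0 : 0 < tau by rewrite divr_gt0 // mulr_gt0.
have tw : tau * `|w| < rho.
  have : tau * (`|w| + 1) = rho / 2 by rewrite /tau; field; rewrite gt_eqF.
  nra.
have [tw1 tw2] : tau * `|w| < d1 /\ tau * `|w| < d - `|u - p|.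
  by move: tw; rewrite lt_min => /andP.
set y := u + tau *: w.
have yu : y - u = tau *: w by rewrite /y addrC addKr.
have nyu : `|y - u| = tau * `|w| by rewrite yu normrZ gtr0_norm.
have py : `|y - p| < d.
  have := ler_normD (y - u) (u - p); rewrite subrKA nyu; lra.
have := Fd1 y u; rewrite nyu yu subrr normr0 -scalemxAl => /(_ tw1 d10) hN.
have := Fd y u py pu; rewrite nyu yu -scalemxAl => hM.
have H : tau * `|w *m N - w *m M| <= tau * (e * `|w|).
  rewrite -[tau in tau * _]gtr0_norm // -normrZ scalerBr.
  have -> : tau *: (w *m N) - tau *: (w *m M) =
      (F y - F u - tau *: (w *m M)) - (F y - F u - tau *: (w *m N)).
    move: (F y - F u) (tau *: (w *m N)) (tau *: (w *m M)) => a b c.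
    by apply/rowP => i; rewrite !mxE; ring.
  apply: (le_trans (ler_normB _ _)); nra.
by rewrite ler_pM2l in H.
Qed.

End StrictJacobian.

(* The library only provides the complete uniform structure of matrices
   separately; this joins it with the normed one, as Banach's fixed point
   theorem requires. *)
HB.instance Definition _ (R : realType) (m n : nat) :=
  Uniform_isComplete.Build 'M[R]_(m, n) (@mx_complete R m n).

Section LocalSurjectivity.
Variable R : realType.

Lemma half_contraction_fixpoint m (T : 'rV[R]_m -> 'rV[R]_m) p r : 0 <= r ->
  (forall x, `|x - p| <= r -> `|T x - p| <= r) ->
  (forall x z, `|x - p| <= r -> `|z - p| <= r -> `|T x - T z| <= 2^-1 * `|x - z|) ->
  exists2 x, `|x - p| <= r & T x = x.
Proof.
move=> r0 TU Tlip.
pose U := closed_ball_ (fun x : 'rV[R]_m => `|x|) p r.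
have UE x : U x = (`|x - p| <= r) :> Prop by rewrite /U /closed_ball_ /= distrC.
have Up : U p by rewrite UE subrr normr0.
have [f Tf] : {f : {fun U >-> U} | T = f}.
  by apply: Pfun => x; rewrite !UE; exact: TU.
have ctr : is_contraction f.
  exists (2^-1)%:nng; split => //=; first by rewrite invf_lt1 // ltr1n.
  by move=> [x z] [/= Ux Uz]; rewrite -Tf; apply: Tlip; rewrite -UE.
have [x Ux xfx] :=
  banach_fixed_point ctr (@closed_closed_ball_ R _ p r) (ex_intro _ p Up).
by exists x; [rewrite -UE | rewrite Tf -xfx].
Qed.

Lemma strict_jac_locally_onto m (F : 'rV[R]_m -> 'rV[R]_m) p M :
  strict_jac F p M -> M \in unitmx -> forall r, 0 < r ->
  exists2 rho, 0 < rho & forall y, `|y - F p| < rho -> exists2 x, `|x - p| <= r & F x = y.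
Proof.
move=> FM uM r r0; set B := invmx M; set C := m%:R * `|B| + 1.
have C0 : 0 < C by rewrite ltr_wpDl // mulr_ge0.
have CB (z : 'rV[R]_m) : `|z *m B| <= C * `|z|.
  by apply: (le_trans (mulmx_norm_le _ _)); rewrite ler_wpM2r // lerDl.
have e0 : 0 < (2 * C)^-1 by rewrite invr_gt0 mulr_gt0.
have [d d0 Fd] := FM _ e0.
set r' := Num.min r (d / 2).
have r'0 : 0 < r' by rewrite lt_min r0 divr_gt0.
have /andP [r'r r'd] : (r' <= r) && (r' <= d / 2) by rewrite -le_min.
exists (r' / (2 * C)); first by rewrite divr_gt0 // mulr_gt0.
move=> y Fpy; pose T x := x - (F x - y) *m B.
have Tlip x z : `|x - p| <= r' -> `|z - p| <= r' -> `|T x - T z| <= 2^-1 * `|x - z|.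
  move=> px pz; have [xd zd] : `|x - p| < d /\ `|z - p| < d by split; lra.
  have -> : T x - T z = ((x - z) *m M - (F x - F z)) *m B.
    rewrite mulmxBl mulmxK // /T !mulmxBl.
    move: (F x *m B) (F z *m B) (y *m B) => a b c.
    by apply/rowP => i; rewrite !mxE; ring.
  apply: (le_trans (CB _)); rewrite -normrN opprB.
  apply: (le_trans (ler_wpM2l (ltW C0) (Fd x z xd zd))).
  by rewrite mulrA invfM mulrCA mulfV ?gt_eqF // mulr1.
have Tp : `|T p - p| <= r' / 2.
  rewrite /T addrAC subrr add0r normrN; apply: (le_trans (CB _)).
  have -> : r' / 2 = C * (r' / (2 * C)) by field; rewrite gt_eqF.
  by rewrite ler_wpM2l // ltW // distrC.
have TU x : `|x - p| <= r' -> `|T x - p| <= r'.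
  move=> px; have := Tlip x p px; rewrite subrr normr0 => /(_ (ltW r'0)) Tx.
  by have := ler_normD (T x - T p) (T p - p); rewrite subrKA; lra.
have [x px Tx] := half_contraction_fixpoint (ltW r'0) TU Tlip.
exists x; first exact: le_trans px r'r.
have w0 : (F x - y) *m B = 0 by apply/oppr_inj/(@addrI _ x); rewrite oppr0 addr0.
by apply/eqP; rewrite -subr_eq0 -[F x - y](mulmxKV uM) -/B w0 mul0mx.
Qed.

Lemma strict_jac_image_interior m (F : 'rV[R]_m -> 'rV[R]_m) (O : set 'rV[R]_m) x M :
  open O -> O x -> strict_jac F x M -> M \in unitmx -> interior (F @` O) (F x).
Proof.
move=> oO Ox FM uM.
have /nbhs_distP [r r0 rO] : nbhs x O by exact: open_nbhs_nbhs.
have r20 : 0 < r / 2 by rewrite divr_gt0.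
have [rho rho0 onto] := strict_jac_locally_onto FM uM r20.
apply/nbhs_distP; exists rho => // y /onto [z xz <-].
by exists z => //; apply: rO; lra.
Qed.

End LocalSurjectivity.

Section ZeroSlope.
Variable R : realType.

Lemma zero_slope_cst (phi : R -> R) (a b : R) :
  (forall x, x \in `]a, b[ -> forall e, 0 < e -> exists2 d, 0 < d &
     forall y, y \in `]a, b[ -> `|y - x| < d -> `|phi y - phi x| <= e * `|y - x|) ->
  {in `]a, b[ &, forall x y, phi x = phi y}.
Proof.
move=> flat.
have inside c : c \in `]a, b[ ->
    exists2 r, 0 < r & forall y, `|y - c| < r -> y \in `]a, b[.
  rewrite in_itv /= => /andP [ac cb]; exists (Num.min (c - a) (b - c)).
    by rewrite lt_min !subr_gt0 ac cb.
  move=> y; rewrite lt_min !ltr_norml in_itv /= => /andP [/andP [? ?] /andP [? ?]].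
  by apply/andP; split; lra.
have der c : c \in `]a, b[ -> is_derive c 1 phi 0.
  move=> cab; have [r r0 rab] := inside c cab.
  have q0 : (fun h => h^-1 *: ((phi \o shift c) (h *: 1) - phi c)) @ 0^' --> (0 : R).
    apply/cvgrPdist_le => e e0; have [d d0 dflat] := flat c cab e e0.
    rewrite near_withinE; apply/nbhs_distP; exists (Num.min d r).
      by rewrite lt_min d0 r0.
    move=> h; rewrite subr0 lt_min => /andP [hd hr] h0.
    have hc : `|(h + c) - c| < r by rewrite addrK.
    have := dflat (h + c) (rab _ hc); rewrite addrK => /(_ hd) flath.
    have hA : h%:A = h :> R by rewrite [LHS]mulr1.
    rewrite /= sub0r normrN hA normrZ normfV ler_pdivrMl ?normr_gt0 //.
    by rewrite mulrC.
  by apply: DeriveDef; [apply/cvg_ex; exists 0 | exact: cvg_lim q0].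
suff lt x y : x \in `]a, b[ -> y \in `]a, b[ -> x < y -> phi x = phi y.
  move=> x y xab yab; case: (ltgtP x y) => [xy|yx|-> //]; first exact: lt.
  exact/esym/lt.
move=> xab yab xy.
have sub : {subset `[x, y] <= `]a, b[}.
  move=> z; move: xab yab; rewrite !in_itv /= => /andP [ax _] /andP [_ yb] /andP [xz zy].
  by apply/andP; split; lra.
have phic : {within `[x, y], continuous phi}.
  by apply: derivable_within_continuous => z zxy; case: (der z (sub z zxy)).
have [c _] := MVT xy (fun c cxy => der c (sub c (subset_itv_oo_cc cxy))) phic.
by rewrite mul0r => /eqP; rewrite subr_eq0 eq_sym => /eqP.
Qed.

End ZeroSlope.

Section RadialLevelSet.
Variables (R : realType) (m : nat) (F : 'rV[R]_m -> 'rV[R]_m) (k : 'rV[R]_m -> R).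
Variables (M : 'rV[R]_m -> 'M[R]_m) (g : 'rV[R]_m -> 'rV[R]_m).
Variables (O : set 'rV[R]_m) (t : 'rV[R]_m).
Hypotheses (oO : open O) (Ot : O t) (uMt : M t \in unitmx).
Hypothesis FM : forall u, O u -> strict_jac F u (M u).
Hypothesis kg : forall u, O u -> strict_grad k u (g u).
Hypothesis radial_kernel : forall u, O u -> exists (v : 'rV_m) beta,
  [/\ v != 0, v *m M u = beta *: F u & rdot v (g u) = 0].

Section GoodBall.
Variables (kap r : R).
Hypotheses (kap0 : 0 < kap) (r0 : 0 < r).
Hypothesis ball_O : forall u, `|u - t| <= r -> O u.
Hypothesis ball_M : forall u, `|u - t| <= r ->
  forall w : 'rV_m, kap * `|w| <= `|w *m M u|.
Hypothesis ball_F : forall y z, `|y - t| <= r -> `|z - t| <= r ->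
  kap * `|y - z| <= `|F y - F z|.

Lemma ball_F_inj y z : `|y - t| <= r -> `|z - t| <= r -> F y = F z -> y = z.
Proof.
move=> ty tz Fyz; have := ball_F ty tz.
by rewrite Fyz subrr normr0 pmulr_rle0 // normr_le0 subr_eq0 => /eqP.
Qed.

Lemma ray_preimage : exists2 eta, 0 < eta < 1 & forall lam, `|lam - 1| < eta ->
  exists2 u, `|u - t| <= r & F u = lam *: F t.
Proof.
have [rho rho0 onto] := strict_jac_locally_onto (FM Ot) uMt r0.
have Ft0 : 0 < `|F t| + 1 by rewrite ltr_wpDl.
exists (Num.min 2^-1 (rho / (`|F t| + 1))).
  by rewrite lt_min invr_gt0 ltr0Sn divr_gt0 //= gt_min invf_lt1 ?ltr0Sn // ltr1n.
move=> lam; rewrite lt_min => /andP [_]; rewrite ltr_pdivlMr // => lam1.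
apply: onto; rewrite -{2}[F t]scale1r -scalerBl normrZ.
have := normr_ge0 (lam - 1); nra.
Qed.

(* On the ray, F u' - F u = ((lam' - lam) / (beta * lam)) *: (v *m M u) with
   rdot v (g u) = 0, so u' - u is nearly parallel to v and k barely moves. *)
Lemma ray_flat u lam : `|u - t| <= r -> F u = lam *: F t -> lam != 0 ->
  forall eps, 0 < eps -> exists2 d, 0 < d & forall u' lam',
    `|u' - u| < d -> F u' = lam' *: F t -> `|k u' - k u| <= eps * `|u' - u|.
Proof.
move=> tu Fu lam0 eps eps0; have Ou := ball_O tu.
have [v [beta [v0 vM vg]]] := radial_kernel Ou.
have beta0 : beta != 0.
  apply: contra_neq v0 => beta0; apply/eqP; rewrite -normr_le0.
  by have := ball_M tu v; rewrite vM beta0 scale0r normr0 pmulr_rle0.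
set K := m%:R * `|g u|.
have K0 : 0 <= K by rewrite mulr_ge0.
have Kk0 : 0 < 1 + K / kap by rewrite ltr_wpDr // divr_ge0 // ltW.
set e1 := eps / (1 + K / kap).
have e10 : 0 < e1 by rewrite divr_gt0.
have [d1 d10 Fd] := FM Ou e10; have [d2 d20 kd] := kg Ou e10.
exists (Num.min d1 d2); first by rewrite lt_min d10 d20.
move=> u' lam'; rewrite lt_min => /andP [ud1 ud2] Fu'.
have uu1 : `|u - u| < d1 by rewrite subrr normr0.
have uu2 : `|u - u| < d2 by rewrite subrr normr0.
set w := u' - u; set al := (lam' - lam) / (beta * lam).
have E : (w - al *: v) *m M u = - (F u' - F u - w *m M u).
  rewrite mulmxBl -scalemxAl vM Fu' Fu !scalerA.
  have -> : al * (beta * lam) = lam' - lam by rewrite /al; field; rewrite beta0 lam0.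
  rewrite scalerBl; move: (w *m M u) (lam' *: F t) (lam *: F t) => a b c.
  by apply/rowP => i; rewrite !mxE; ring.
have hw : kap * `|w - al *: v| <= e1 * `|w|.
  by apply: (le_trans (ball_M tu _)); rewrite E normrN; exact: Fd.
have hk : `|k u' - k u - rdot w (g u)| <= e1 * `|w| by exact: kd.
have hg : `|rdot w (g u)| <= K * `|w - al *: v|.
  by rewrite -[rdot w _]subr0 -[X in _ - X](mulr0 al) -vg -rdotZl -rdotBl rdot_le.
have hw' : `|w - al *: v| <= e1 * `|w| / kap by rewrite ler_pdivlMr // mulrC.
have hKw := ler_wpM2l K0 hw'.
have epsE : eps = e1 * (1 + K / kap) by rewrite /e1 divfK // gt_eqF.
have := ler_normD (k u' - k u - rdot w (g u)) (rdot w (g u)); rewrite subrK.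
by rewrite epsE; lra.
Qed.

Lemma radial_level_set_ball : exists2 eta, 0 < eta & forall lam, `|lam - 1| < eta ->
  exists u, [/\ O u, F u = lam *: F t & k u = k t].
Proof.
have [eta /andP [eta0 eta1] pre] := ray_preimage.
have /choice [gam gamP] : forall lam, exists u, `|lam - 1| < eta ->
    `|u - t| <= r /\ F u = lam *: F t.
  move=> lam; case: (pselect (`|lam - 1| < eta)) => [/pre [u tu Fu]|lam1].
    by exists u.
  by exists t => /lam1.
have inI lam : (lam \in `]1 - eta, 1 + eta[) = (`|lam - 1| < eta).
  by rewrite in_itv /= ltr_distl.
set C := `|F t| / kap + 1.
have C0 : 0 < C by rewrite ltr_wpDl // divr_ge0 // ltW.
have gam_lip lam lam' : `|lam - 1| < eta -> `|lam' - 1| < eta ->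
    `|gam lam' - gam lam| <= C * `|lam' - lam|.
  move=> /gamP [tu Fu] /gamP [tu' Fu'].
  have := ball_F tu' tu; rewrite Fu' Fu -scalerBl normrZ -ler_pdivlMl // mulrA => lip.
  by apply: (le_trans lip); have := normr_ge0 (lam' - lam); rewrite /C; lra.
have gam1 : gam 1 = t.
  have [t1 F1] : `|gam 1 - t| <= r /\ F (gam 1) = 1 *: F t.
    by apply: gamP; rewrite subrr normr0.
  by apply: ball_F_inj t1 _ _; rewrite ?F1 ?scale1r // subrr normr0 ltW.
have flat lam : lam \in `]1 - eta, 1 + eta[ -> forall e, 0 < e ->
    exists2 d, 0 < d & forall lam', lam' \in `]1 - eta, 1 + eta[ ->
      `|lam' - lam| < d -> `|k (gam lam') - k (gam lam)| <= e * `|lam' - lam|.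
  rewrite inI => lam1 e e0; have [tu Fu] := gamP _ lam1.
  have lam0 : lam != 0.
    by apply: contraTneq lam1 => ->; rewrite sub0r normrN normr1 -leNgt ltW.
  have [d d0 kflat] := ray_flat tu Fu lam0 (divr_gt0 e0 C0).
  exists (d / C) => [|lam']; first by rewrite divr_gt0.
  rewrite inI => lam1' lamd; have [_ Fu'] := gamP _ lam1'.
  have gl := gam_lip _ _ lam1 lam1'.
  have gd : `|gam lam' - gam lam| < d.
    by apply: (le_lt_trans gl); rewrite mulrC -ltr_pdivlMr.
  apply: (le_trans (kflat _ _ gd Fu')).
  have -> : e * `|lam' - lam| = e / C * (C * `|lam' - lam|).
    by rewrite mulrA divfK // gt_eqF.
  by rewrite ler_wpM2l // divr_ge0 // ltW.
exists eta => // lam lam1; have [tu Fu] := gamP _ lam1.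
exists (gam lam); split => //; first exact: ball_O.
by rewrite -gam1; apply: (zero_slope_cst flat); rewrite inI // subrr normr0.
Qed.

End GoodBall.

Lemma radial_level_set : exists2 eta, 0 < eta & forall lam, `|lam - 1| < eta ->
  exists u, [/\ O u, F u = lam *: F t & k u = k t].
Proof.
have [kap kap0 Mt] := unitmx_norm_lb uMt.
have kap20 : 0 < kap / 2 by rewrite divr_gt0.
have [d1 d10 Mnear] := strict_jac_near (FM Ot) kap20.
have [d2 d20 Flb] := strict_jac_lower_bound (FM Ot) kap0 Mt.
have /nbhs_distP [d3 d30 dO] : nbhs t O by exact: open_nbhs_nbhs.
set d := Num.min d1 (Num.min d2 d3).
have d0 : 0 < d by rewrite !lt_min d10 d20 d30.
have /and3P [dd1 dd2 dd3] : [&& d <= d1, d <= d2 & d <= d3].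
  by rewrite -!le_min.
have ball_O u : `|u - t| <= d / 2 -> O u by move=> tu; apply: dO; lra.
apply: (radial_level_set_ball (kap := kap / 2) (r := d / 2)) => //.
- by rewrite divr_gt0.
- move=> u tu w; have tud : `|u - t| < d1 by lra.
  have := Mnear u (M u) tud (FM (ball_O u tu)) w; have := Mt w.
  by have := lerB_dist (w *m M t) (w *m M u); rewrite distrC; lra.
- by move=> y z ty tz; apply: Flb; lra.
Qed.

End RadialLevelSet.

Section Hypersurface.
Variables (R : realType) (n : nat) (P Q : 'I_n.+2 -> mpoly.mpoly n.+1 R).
Variable D : set 'rV[R]_n.+1.
Hypothesis hD : defined_on Q D.

(* An arbitrary strict gradient of sigma_i at u, and 0 if there is none. *)
Definition sigma_grad i u : 'rV[R]_n.+1 :=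
  xget 0 (strict_grad (fun y => sigma P Q y 0 i) u).

Definition sigma_hat_grad i u : 'rV[R]_n.+1 :=
  (sigma P Q u 0 ord0)^-1 *: sigma_grad (lift ord0 i) u
  - (sigma P Q u 0 (lift ord0 i) / sigma P Q u 0 ord0 ^+ 2) *: sigma_grad ord0 u.

Definition sigma_bar_jac u := grad_mx (fun i => sigma_grad (widen_ord (leqnSn n.+1) i) u).

Definition sigma_hat_jac u := grad_mx (sigma_hat_grad^~ u).

Lemma sigma_barE u i : sigma_bar P Q u 0 i = sigma P Q u 0 (widen_ord (leqnSn n.+1) i).
Proof. by rewrite /sigma_bar [LHS]mxE. Qed.

Lemma sigma_hatE u i :
  sigma_hat P Q u 0 i = sigma P Q u 0 (lift ord0 i) / sigma P Q u 0 ord0.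
Proof. by rewrite /sigma_hat [LHS]mxE. Qed.

Lemma sigma_strict_grad i u : D u ->
  strict_grad (fun y => sigma P Q y 0 i) u (sigma_grad i u).
Proof.
move=> Du; apply: xgetPex.
have [gP HP] := strict_diff_meval (P i) u; have [gQ HQ] := strict_diff_meval (Q i) u.
eexists; apply: (strict_grad_ext _ (strict_grad_div HP HQ (hD Du i))) => y.
by rewrite /sigma mxE.
Qed.

Lemma sigma_bar_strict_jac u : D u -> strict_jac (sigma_bar P Q) u (sigma_bar_jac u).
Proof.
move=> Du; apply: strict_jac_grad_mx => i.
by apply: (strict_grad_ext _ (sigma_strict_grad _ Du)) => y; rewrite sigma_barE.
Qed.

Lemma sigma_hat_strict_grad i u : D u -> sigma P Q u 0 ord0 != 0 ->
  strict_grad (fun y => sigma_hat P Q y 0 i) u (sigma_hat_grad i u).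
Proof.
move=> Du s0; apply: (strict_grad_ext _ (strict_grad_div
  (sigma_strict_grad (lift ord0 i) Du) (sigma_strict_grad ord0 Du) s0)) => y.
by rewrite sigma_hatE.
Qed.

Lemma sigma_hat_radial_kernel (O : set 'rV[R]_n.+1) u :
  open O -> O u -> D u -> sigma P Q u 0 ord0 != 0 ->
  ~ interior (sigma_hat P Q @` O) (sigma_hat P Q u) ->
  exists (v : 'rV_n.+1) beta, [/\ v != 0,
    v *m sigma_bar_jac u = beta *: sigma_bar P Q u
    & rdot v (sigma_hat_grad ord_max u) = 0].
Proof.
move=> oO Ou Du s0 notint.
have /det0P [v v0 vJ] : \det (sigma_hat_jac u) == 0.
  case: eqP => // /eqP det0; exfalso; apply: notint.
  apply: (strict_jac_image_interior oO Ou).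
    exact: strict_jac_grad_mx (fun i => sigma_hat_strict_grad i Du s0).
  by rewrite unitmxE unitfE.
have vhat i : rdot v (sigma_hat_grad i u) = 0.
  by rewrite -(mulmx_grad_mx v (sigma_hat_grad^~ u)) vJ mxE.
have kern := quotient_grad_kernel (s := fun j => sigma P Q u 0 j)
  (g := sigma_grad^~ u) s0 vhat.
exists v, (rdot v (sigma_grad ord0 u) / sigma P Q u 0 ord0); split => //.
by apply/rowP => i; rewrite mulmx_grad_mx kern [RHS]mxE sigma_barE.
Qed.

Lemma sigma_scale u t lam : sigma P Q u 0 ord0 != 0 -> sigma P Q t 0 ord0 != 0 ->
  sigma_bar P Q u = lam *: sigma_bar P Q t ->
  sigma_hat P Q u 0 ord_max = sigma_hat P Q t 0 ord_max ->
  sigma P Q u = lam *: sigma P Q t.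
Proof.
move=> su st bar hat; apply/rowP => j; rewrite [RHS]mxE.
have barE i : sigma P Q u 0 (widen_ord (leqnSn n.+1) i) =
    lam * sigma P Q t 0 (widen_ord (leqnSn n.+1) i).
  by rewrite -!sigma_barE bar [LHS]mxE.
case: (unliftP ord_max j) => [i ->|->].
  have -> : lift ord_max i = widen_ord (leqnSn n.+1) i.
    by apply: val_inj; rewrite /= /bump leqNgt ltn_ord.
  exact: barE.
have := barE ord0; rewrite (_ : widen_ord _ ord0 = ord0); last exact: val_inj.
move: hat; rewrite !sigma_hatE (_ : lift ord0 ord_max = ord_max); last exact: val_inj.
by move=> hat s0; rewrite -(divfK su (sigma P Q u 0 ord_max)) hat s0; field.
Qed.

End Hypersurface.

Theorem theorem6 (R : realType) (m : nat) (hm : (1 <= m)%N)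
  (P Q : 'I_m.+1 -> mpoly.mpoly m R) (D : set 'rV[R]_m)
  (hD : defined_on Q D) (O : set 'rV[R]_m)
  (hOopen : open O) (hOD : O `<=` D)
  (hO1 : forall u, O u -> sigma P Q u ord0 ord0 != 0)
  (t : 'rV[R]_m) (ht : O t)
  (hdet : \det (jacobian (sigma_bar P Q) t) != 0)
  (hnoU : ~ (exists U : set R, nbhs (1 : R) U /\
             (forall lam, U lam ->
                rp_hypersurface P Q D (lam *: sigma P Q t)))) :
  inner_point_condition P Q O.
Proof.
destruct m as [|n]; first by [].
apply: contrapT => noIPC; apply: hnoU.
have DJ u (Ou : O u) : strict_jac (sigma_bar P Q) u (sigma_bar_jac P Q u) :=
  sigma_bar_strict_jac P hD (hOD u Ou).
have uJt : sigma_bar_jac P Q t \in unitmx.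
  by rewrite unitmxE unitfE -(strict_jac_jacobian (DJ t ht)).
have [eta eta0 level] := radial_level_set hOopen ht uJt DJ
  (fun u Ou => sigma_hat_strict_grad hD ord_max (hOD _ Ou) (hO1 _ Ou))
  (fun u Ou => sigma_hat_radial_kernel hD hOopen Ou (hOD _ Ou) (hO1 _ Ou)
     (fun int => noIPC (ex_intro _ u (conj Ou int)))).
exists [set lam | `|lam - 1| < eta]; split; first by apply/nbhs_distP; exists eta.
move=> lam /level [u [Ou bar hat]]; exists u; first exact: hOD.
exact: sigma_scale (hO1 _ Ou) (hO1 _ ht) bar hat.
Qed.
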